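(* Let $\chi\geq 3$ and $m\geq 2$ be integers, let $T_\chi$ be any non-transitive tournament on $[\chi]$, and let $H=H(T_\chi,m)$. Let $n,t\geq 1$ be integers such that $\lfloor 3t/2\rfloor+1<n$. Then $R(P^{(3)}_{n,2},H)\geq (m-1)t+1$.
   Context: A tournament on $[\chi]$ is an orientation of the complete graph on $[\chi]$; it is transitive if acyclic. For a tournament $T_\chi$ on $[\chi]$ and $m\ge1$, $H(T_\chi,m)$ is the $3$-uniform hypergraph whose vertex set is partitioned into sets $A_1,\dots,A_\chi$ each of size $m$, with edge set $\{xyz: x,y\in A_i,\ z\in A_j,\ (i,j)\text{ an arc of }T_\chi\}$. $R(G,H)$ for 3-graphs is the least $N$ such that every red/blue colouring of the edges of $K^{(3)}_N$ contains a red copy of $G$ or a blue copy of $H$. The tight path $P^{(3)}_{n,2}$ has vertices $v_1,\dots,v_n$ and edges $\{v_i,v_{i+1},v_{i+2}\}$, $i\in[n-2]$. *)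

From mathcomp Require Import all_boot.
Set Implicit Arguments. Unset Strict Implicit. Unset Printing Implicit Defensive.

Definition uniform3 (V : finType) (E : {set {set V}}) : Prop :=
  forall e, e \in E -> #|e| = 3.

(* A red/blue colouring of the edges of K^(3)_N on vertex set 'I_N:
   c e = true means the triple e is red, false means blue
   (values on non-3-sets are irrelevant). *)
Definition colouring (N : nat) := {set 'I_N} -> bool.

Definition has_copy (N : nat) (c : colouring N) (col : bool)
    (V : finType) (E : {set {set V}}) : Prop :=
  exists f : V -> 'I_N, injective f /\ forall e, e \in E -> c (f @: e) = col.

Definition ramsey_prop (N : nat) (V1 : finType) (E1 : {set {set V1}})
    (V2 : finType) (E2 : {set {set V2}}) : Prop :=
  forall c : colouring N, has_copy c true E1 \/ has_copy c false E2.

(* R(G,H) >= k  :<->  the least N with ramsey_prop N is at least k, i.e.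
   every N with ramsey_prop N satisfies k <= N. *)
Definition ramsey_ge (k : nat) (V1 : finType) (E1 : {set {set V1}})
    (V2 : finType) (E2 : {set {set V2}}) : Prop :=
  forall N, ramsey_prop N E1 E2 -> k <= N.

Definition tight_path_edges (n : nat) : {set {set 'I_n}} :=
  [set e : {set 'I_n} | [exists i : 'I_n,
      (i.+2 < n) && (e == [set x : 'I_n | (i <= x) && (x <= i.+2)])]].

Definition tournament (chi : nat) (T : rel 'I_chi) : Prop :=
  (forall i, ~~ T i i) /\ (forall i j, i != j -> T i j (+) T j i).

(* Acyclic (= transitive tournament): no closed directed walk of positive length. *)
Definition acyclic (chi : nat) (T : rel 'I_chi) : Prop :=
  forall (x : 'I_chi) (p : seq 'I_chi), path T x p -> last x p = x -> p = [::].

(* H(T_chi, m): vertex set 'I_chi * 'I_m, with A_i = {(i,k) : k < m};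
   edges {x,y,z} with x,y distinct in A_i, z in A_j, (i,j) an arc of T. *)
Definition H_edges (chi m : nat) (T : rel 'I_chi) :
    {set {set ('I_chi * 'I_m)}} :=
  [set e : {set ('I_chi * 'I_m)} | [exists x, exists y, exists z,
      [&& x != y, x.1 == y.1, T x.1 z.1 & e == [set x; y; z]]]].

From mathcomp Require Import all_boot.
From mathcomp Require Import zify.
Set Implicit Arguments. Unset Strict Implicit. Unset Printing Implicit Defensive.

(* Split the N < (m-1)t + 1 vertices into at most m - 1 consecutive blocks of
   t vertices, and colour a triple red iff its lowest block contains at least
   two of its vertices.  In a red tight path consecutive triples share two
   vertices, which forces all triples to have the same lowest block; every
   triple then has two vertices in that block of size t, so the path has at
   most floor(3t/2) + 1 vertices.  In a blue copy of H(T, m), pigeonhole gives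
   two vertices of each A_i in a common block, and blueness of the triples
   they span with A_j for an arc (i, j) puts all of A_j strictly below that
   block.  The highest block met by A_i thus decreases strictly along arcs,
   so T would be acyclic. *)

Definition min3 (x y z : nat) : nat := minn x (minn y z).

Definition min_twice (x y z : nat) : bool :=
  2 <= (x == min3 x y z) + (y == min3 x y z) + (z == min3 x y z).

Lemma min_twice_shift x y z w :
  min_twice x y z -> min_twice y z w -> min3 x y z = min3 y z w.
Proof. by rewrite /min_twice /min3; do 6!case: eqP; lia. Qed.

Section MinKeyRepeated.

Variables (V : finType) (key : V -> nat).

Definition min_key_repeated (S : {set V}) : bool :=
  [exists u in S, exists v in S,
     [&& u != v, key u == key v & [forall w in S, key u <= key w]]].

Lemma min_key_repeatedI (S : {set V}) u v :
  u \in S -> v \in S -> u != v -> key u = key v ->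
  (forall w, w \in S -> key u <= key w) -> min_key_repeated S.
Proof.
move=> uS vS neq_uv eq_key min_u; apply/existsP; exists u; rewrite uS /=.
apply/existsP; exists v; rewrite vS neq_uv eq_key eqxx /=.
by apply/forall_inP => w /min_u; rewrite eq_key.
Qed.

Lemma min_key_repeated3 a b c :
  min_key_repeated [set a; b; c] -> min_twice (key a) (key b) (key c).
Proof.
case/exists_inP => u uS /exists_inP [v vS /and3P [neq_uv /eqP eq_key /forall_inP min_u]].
have [le_a le_b le_c] : [/\ key u <= key a, key u <= key b & key u <= key c].
  by split; apply: min_u; rewrite !inE eqxx ?orbT.
move: uS vS neq_uv eq_key le_a le_b le_c; rewrite /min_twice /min3 !inE -!orbA.
by move=> /or3P [] /eqP-> /or3P [] /eqP->; rewrite ?eqxx // => _; do 3!case: eqP; lia.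
Qed.

Lemma key_lt_of_not_min_key_repeated x y z :
  ~~ min_key_repeated [set x; y; z] -> x != y -> key x = key y -> key z < key x.
Proof.
move=> not_rep neq_xy eq_key; rewrite ltnNge; apply: contra not_rep => le_xz.
apply: (min_key_repeatedI (u := x) (v := y)); rewrite ?inE ?eqxx ?orbT //.
by move=> w; rewrite !inE -!orbA => /or3P [] /eqP->; rewrite -?eq_key.
Qed.

End MinKeyRepeated.

Definition block_colouring (t N : nat) : colouring N :=
  min_key_repeated (fun v : 'I_N => v %/ t).
Arguments block_colouring : clear implicits.

Lemma card_block (t N q : nat) : 0 < t -> #|[set v : 'I_N | v %/ t == q]| <= t.
Proof.
move=> t_gt0; pose rem (v : 'I_N) : 'I_t := Ordinal (ltn_pmod v t_gt0).
have rem_inj : {in [set v : 'I_N | v %/ t == q] &, injective rem}.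
  move=> u v; rewrite !inE => /eqP u_q /eqP v_q [eq_rem]; apply: val_inj.
  by rewrite /= (divn_eq u t) (divn_eq v t) u_q v_q eq_rem.
by rewrite -(card_in_imset rem_inj) -[t in _ <= t]card_ord max_card.
Qed.

Section TightWindows.

Variables (b : nat -> nat) (n : nat).

Hypothesis windows : forall i, i.+2 < n -> min_twice (b i) (b i.+1) (b i.+2).

Let mu := min3 (b 0) (b 1) (b 2).

Lemma window_min_const i : i.+2 < n -> min3 (b i) (b i.+1) (b i.+2) = mu.
Proof.
elim: i => // i IHi lt_i3n; have lt_i2n := ltnW lt_i3n.
by rewrite -(IHi lt_i2n); symmetry; apply: min_twice_shift; apply: windows.
Qed.

Lemma count_window_min :
  3 <= n -> n <= (3 * count (fun i => b i == mu) (iota 0 n))./2 + 1.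
Proof.
move=> n_ge3; have window0 := windows n_ge3; rewrite /min_twice -/mu in window0.
suff count_prefix k : k <= n -> 2 * k <= 3 * count (fun i => b i == mu) (iota 0 k) + 2.
  by have := count_prefix n (leqnn n); rewrite -divn2; lia.
elim/ltn_ind: k => k IHk le_kn.
case: (ltnP k 3) => [lt_k3 | le_3k].
  by move: lt_k3 window0; case: k {IHk le_kn} => [|[|[|]]] //=; do 3!case: eqP; lia.
have [j def_k] : exists j, k = j + 3 by exists (k - 3); lia.
have lt_j2n : j.+2 < n by lia.
have := windows lt_j2n; rewrite /min_twice window_min_const //.
have := IHk j (ltac:(lia)) (ltac:(lia)).
rewrite def_k iotaD count_cat /=; do 3!case: eqP; lia.
Qed.

End TightWindows.

Lemma count_iota_card n (P : pred nat) : count P (iota 0 n) = #|[set i : 'I_n | P i]|.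
Proof. by rewrite -sum1_count -sum1dep_card -{1}(subn0 n) big_mkord. Qed.

Lemma tight_path_window n i :
  i.+2 < n.+1 -> [set inord i; inord i.+1; inord i.+2] \in tight_path_edges n.+1.
Proof.
move=> lt_i2n; rewrite inE; apply/existsP; exists (inord i).
rewrite inordK ?lt_i2n /=; last exact: ltn_trans lt_i2n.
by apply/eqP/setP => x; rewrite !inE -!val_eqE /= !inordK; lia.
Qed.

Lemma block_colouring_no_red_tight_path (t N n : nat) :
  0 < t -> (3 * t)./2 + 1 < n ->
  ~ has_copy (block_colouring t N) true (tight_path_edges n).
Proof.
case: n => // n t_gt0 n_big [f [f_inj f_red]].
pose b i := f (inord i) %/ t.
have windows i : i.+2 < n.+1 -> min_twice (b i) (b i.+1) (b i.+2).
  move=> /tight_path_window/f_red; rewrite !imsetU !imset_set1.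
  exact: min_key_repeated3.
set mu := min3 (b 0) (b 1) (b 2).
have count_le_t : count (fun i => b i == mu) (iota 0 n.+1) <= t.
  rewrite count_iota_card; apply: leq_trans (card_block N mu t_gt0).
  rewrite -(card_imset _ f_inj); apply/subset_leq_card/subsetP => v /imsetP [i].
  by rewrite !inE /b inord_val => ? ->.
have n_ge3 : 3 <= n.+1 by rewrite -divn2 in n_big; lia.
have := count_window_min windows n_ge3; rewrite -/mu; lia.
Qed.

Lemma ord_pigeonhole m p (F : 'I_m -> nat) :
  p < m -> (forall k, F k < p) -> exists k1, exists2 k2, k1 != k2 & F k1 = F k2.
Proof.
move=> lt_pm lt_F; pose G k : 'I_p := Ordinal (lt_F k).
have /injectivePn [k1 [k2 neq_k eq_G]] : ~~ injectiveb G.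
  by apply/injectiveP => /leq_card; rewrite !card_ord leqNgt lt_pm.
by exists k1, k2 => //; case: eq_G.
Qed.

Lemma acyclic_of_rank chi (T : rel 'I_chi) (rank : 'I_chi -> nat) :
  (forall i j, T i j -> rank j < rank i) -> acyclic T.
Proof.
move=> rank_lt; suff rank_last x p : path T x p -> p != [::] -> rank (last x p) < rank x.
  by move=> x [|y p] // Tp last_x; have := rank_last x _ Tp isT; rewrite last_x ltnn.
elim: p x => // y p IHp x /= /andP [Txy Tp] _.
case: p IHp Tp => [|z p] IHp Tp; first exact: rank_lt.
exact: ltn_trans (IHp y Tp isT) (rank_lt _ _ Txy).
Qed.

Lemma block_colouring_blue_H_acyclic chi m (T : rel 'I_chi) (t N : nat) :
  0 < m -> 0 < t -> N <= (m - 1) * t ->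
  has_copy (block_colouring t N) false (H_edges m T) -> acyclic T.
Proof.
move=> m_gt0 t_gt0 N_le [g [g_inj g_blue]].
pose blk (v : 'I_N) := v %/ t.
have blk_lt v : blk v < m - 1 by rewrite ltn_divLR //; apply: leq_trans N_le.
pose rank i := \max_(k < m) blk (g (i, k)).
apply: (@acyclic_of_rank _ _ rank) => i j Tij.
have lt_m : m - 1 < m by lia.
have [k1 [k2 neq_k eq_blk]] :=
  ord_pigeonhole (F := fun k => blk (g (i, k))) lt_m (fun k => blk_lt _).
have below k : blk (g (j, k)) < blk (g (i, k1)).
  apply: (@key_lt_of_not_min_key_repeated _ blk _ (g (i, k2))) => //; last first.
    by rewrite (inj_eq g_inj) xpair_eqE eqxx.
  have edge : [set (i, k1); (i, k2); (j, k)] \in H_edges m T.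
    rewrite inE; apply/existsP; exists (i, k1); apply/existsP; exists (i, k2).
    by apply/existsP; exists (j, k); rewrite xpair_eqE eqxx neq_k Tij eqxx.
  by have := g_blue _ edge; rewrite !imsetU !imset_set1 => /negbT.
have m_card : 0 < #|'I_m| by rewrite card_ord.
rewrite /rank; have [k ->] := eq_bigmax (fun k => blk (g (j, k))) m_card.
exact: leq_trans (below k) (leq_bigmax (F := fun k => blk (g (i, k))) k1).
Qed.

Theorem proposition1p13 (chi m : nat) (T : rel 'I_chi) (n t : nat) :
  3 <= chi -> 2 <= m ->
  tournament T -> ~ acyclic T ->
  1 <= n -> 1 <= t -> (3 * t)./2 + 1 < n ->
  ramsey_ge ((m - 1) * t + 1) (tight_path_edges n) (H_edges m T).
Proof.
move=> _ m_ge2 _ cyclic_T _ t_gt0 n_big N ramsey_N.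
rewrite addn1 ltnNge; apply/negP => N_le.
have [red_path | blue_H] := ramsey_N (block_colouring t N).
  exact: block_colouring_no_red_tight_path red_path.
exact/cyclic_T/(block_colouring_blue_H_acyclic (ltnW m_ge2) t_gt0 N_le blue_H).
Qed.
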